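(* Let $\Lambda\subset\mathbb{R}^2$ be a lattice invariant under $\mathrm{diag}(e^a,e^{-a})$ for some $a\neq0$ (so that $\Gamma=\Lambda\rtimes a\mathbb{Z}$ is a lattice in $\mathsf{Solv}$), and let $\Lambda'=\{\underline{\mu}\in\mathbb{R}^2:\underline{\mu}\cdot m\in2\pi\mathbb{Z}\ \forall m\in\Lambda\}$ be its dual lattice. For $\underline{\mu}=(\mu,\mu')\in\Lambda'\setminus\{0\}$ consider the operator $\Delta_{\underline{\mu}}f=-f_{zz}+(\mu^2e^{-2z}+(\mu')^2e^{2z})f$ on $L^2(\mathbb{R})$. Then the first eigenvalue of $\Delta_{\underline{\mu}}$ is at least $2|\mu\mu'|$, and $2|\mu\mu'|\neq0$.
   Context: $\mathsf{Solv}$ is $\mathbb{R}^2\rtimes\mathbb{R}$ with $z\in\mathbb{R}$ acting on $\mathbb{R}^2$ by $\mathrm{diag}(e^z,e^{-z})$, with left-invariant metric $e^{2z}dx^2+e^{-2z}dy^2+dz^2$. The operators $\Delta_{\underline{\mu}}$ are the Fourier components of the Laplacian on functions on $\Gamma\backslash\mathsf{Solv}$ with respect to the $\mathbb{R}^2$-directions. *)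

From HB Require Import structures.
From mathcomp Require Import all_boot all_order all_algebra.
From mathcomp Require Import all_classical all_reals all_analysis.
Set Implicit Arguments. Unset Strict Implicit. Unset Printing Implicit Defensive.
Import Order.TTheory GRing.Theory Num.Theory.
Import numFieldNormedType.Exports.
Local Open Scope classical_set_scope.
Local Open Scope ring_scope.

Section SolvDefs.
Variable R : realType.

Definition lattice2 (L : set (R * R)) : Prop :=
  exists v w : R * R, v.1 * w.2 - v.2 * w.1 != 0 /\
    L = [set m | exists k l : int,
           m = (k%:~R * v.1 + l%:~R * w.1, k%:~R * v.2 + l%:~R * w.2)].

Definition solv_act (z : R) (m : R * R) : R * R :=
  (expR z * m.1, expR (- z) * m.2).

Definition dual_lattice (L : set (R * R)) : set (R * R) :=
  [set mu | forall m, L m -> exists k : int, mu.1 * m.1 + mu.2 * m.2 = 2 * pi * k%:~R].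

Definition Delta_mu (mu : R * R) (f : R -> R) (z : R) : R :=
  - derive1 (derive1 f) z + (mu.1 ^+ 2 * expR (- 2 * z) + mu.2 ^+ 2 * expR (2 * z)) * f z.

Definition is_eigenvalue (mu : R * R) (lam : R) : Prop :=
  exists f : R -> R,
    (forall z, derivable f z 1 /\ derivable (derive1 f) z 1) /\
    (@lebesgue_measure R).-integrable setT (fun z => ((f z) ^+ 2)%:E) /\
    f <> (fun _ => 0) /\
    (forall z, Delta_mu mu f z = lam * f z).

End SolvDefs.

From HB Require Import structures.
From mathcomp Require Import all_boot all_order all_algebra.
From mathcomp Require Import all_classical all_reals all_analysis.
From mathcomp Require Import lra ring.
Set Implicit Arguments. Unset Strict Implicit.
Import Order.TTheory GRing.Theory Num.Theory.
Import numFieldNormedType.Exports.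
Local Open Scope classical_set_scope.
Local Open Scope ring_scope.

(* The potential mu^2 e^{-2z} + mu'^2 e^{2z} is at least 2|mu mu'| (AM-GM).  If
   -f'' + V f = lam f with lam <= V, then (f f')' = f'^2 + (V - lam) f^2 >= 0, so
   f^2 is monotone on a half-line starting at any point where f does not vanish;
   it is then bounded below there by a positive constant, so f is not in L^2.
   If mu = (0, mu'), take m in the lattice with m_2 != 0: invariance under
   diag(e^{na}, e^{-na}) puts mu' m_2 e^{-n|a|} in 2 pi Z for every n, and these
   numbers tend to 0, so mu' m_2 = 0.  The case mu' = 0 is symmetric. *)

Lemma not_integrable_ge_cst {R : realType} {d} {T : measurableType d}
    (mu : {measure set T -> \bar R}) (I : set T) (g : T -> R) (c : R) :
  measurable I -> mu I = +oo%E -> 0 < c -> (forall x, I x -> c <= g x) ->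
  ~ mu.-integrable setT (fun x => (g x)%:E).
Proof.
move=> mI muI c0 cg gint.
have gI := integrableS measurableT mI (subsetT I) gint.
have /integrableP[_ fin] := gI.
suff : (c%:E * mu I <= \int[mu]_(x in I) `|(g x)%:E|)%E.
  by rewrite muI gt0_muley ?lte_fin // leye_eq => /eqP e; rewrite e ltxx in fin.
rewrite -integral_cst //; apply: ge0_le_integral => //.
- by move=> x _; rewrite lee_fin ltW.
- exact: measurable_int (integrable_abse gI).
- by move=> x Ix /=; rewrite lee_fin (le_trans (cg x Ix)) // ler_norm.
Qed.

Section square_monotone.
Variables (R : realType) (f V : R -> R) (lam : R).
Hypothesis df : forall z, derivable f z 1 /\ derivable (derive1 f) z 1.
Hypothesis V_ge : forall z, lam <= V z.
Hypothesis f_eq : forall z, - derive1 (derive1 f) z + V z * f z = lam * f z.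

Let dfdf z : derivable (f * derive1 f) z 1.
Proof. exact: derivableM (df z).1 (df z).2. Qed.
Let dsqr z : derivable (f ^+ 2) z 1. Proof. exact: derivableX (df z).1. Qed.

Lemma derive1_sqr z : derive1 (f ^+ 2) z = 2 * (f z * derive1 f z).
Proof.
rewrite derive1E (deriveX _ (df z).1) -derive1E /GRing.scale /= expr1.
by rewrite mulrA.
Qed.

Lemma derive1_mul_derive1_ge0 z : 0 <= derive1 (f * derive1 f) z.
Proof.
rewrite derive1E (deriveM (df z).1 (df z).2) -!derive1E /GRing.scale /=.
have -> : derive1 (derive1 f) z = (V z - lam) * f z by move: (f_eq z); lra.
have := V_ge z; have := sqr_ge0 (f z); have := sqr_ge0 (derive1 f z); nra.
Qed.

Lemma mul_derive1_nondecreasing : {homo f * derive1 f : x y / x <= y}.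
Proof.
move=> x y xy.
apply: (ger0_derive1_le_cc (f := f * derive1 f) (a := x) (b := y)).
- by move=> t _; exact: dfdf.
- by move=> t _; exact: derive1_mul_derive1_ge0.
- by apply: derivable_within_continuous => t _; exact: dfdf.
- by rewrite in_itv /= lexx xy.
- by rewrite in_itv /= lexx xy.
- exact: xy.
Qed.

Lemma sqr_ge_on_half_line z0 :
  (forall z, z0 <= z -> f z0 ^+ 2 <= f z ^+ 2) \/
  (forall z, z <= z0 -> f z0 ^+ 2 <= f z ^+ 2).
Proof.
have csqr a b : {within `[a, b], continuous (f ^+ 2)}.
  by apply: derivable_within_continuous => t _; exact: dsqr.
have [h0|h0] := leP 0 ((f * derive1 f) z0); [left|right] => z zz.
- apply: (ger0_derive1_le_cc (f := f ^+ 2) (a := z0) (b := z)).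
  + by move=> t _; exact: dsqr.
  + move=> t; rewrite in_itv /= derive1_sqr => /andP[t1 _].
    by rewrite pmulr_rge0 // (le_trans h0) // mul_derive1_nondecreasing // ltW.
  + exact: csqr.
  + by rewrite in_itv /= lexx zz.
  + by rewrite in_itv /= lexx zz.
  + exact: zz.
- apply: (ler0_derive1_le_cc (f := f ^+ 2) (a := z) (b := z0)).
  + by move=> t _; exact: dsqr.
  + move=> t; rewrite in_itv /= derive1_sqr => /andP[_ t2].
    by rewrite pmulr_rle0 // (le_trans _ (ltW h0)) // mul_derive1_nondecreasing // ltW.
  + exact: csqr.
  + by rewrite in_itv /= lexx zz.
  + by rewrite in_itv /= lexx zz.
  + exact: zz.
Qed.

Lemma square_integrable_solution_eq0 :
  (@lebesgue_measure R).-integrable setT (fun z => (f z ^+ 2)%:E) ->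
  f = fun _ => 0.
Proof.
move=> fint; apply/funext => z0; have [//|fz0] := eqVneq (f z0) 0; exfalso.
have c0 : 0 < f z0 ^+ 2 by rewrite exprn_even_gt0.
have [fge|fge] := sqr_ge_on_half_line z0.
- apply: (not_integrable_ge_cst (mu := @lebesgue_measure R)
    (I := [set` `[z0, +oo[%R]) _ _ c0 _ fint).
  + exact: measurable_itv.
  + have := lebesgue_measure_itv `[z0, +oo[%R; rewrite /= ltry; exact.
  + by move=> z /=; rewrite in_itv /= andbT; exact: fge.
- apply: (not_integrable_ge_cst (mu := @lebesgue_measure R)
    (I := [set` `]-oo, z0]%R]) _ _ c0 _ fint).
  + exact: measurable_itv.
  + have := lebesgue_measure_itv `]-oo, z0]%R; rewrite /= ltNyr; exact.
  + by move=> z /=; rewrite in_itv /=; exact: fge.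
Qed.

End square_monotone.

Lemma potential_ge {R : realType} (mu : R * R) (z : R) :
  2 * `|mu.1 * mu.2| <= mu.1 ^+ 2 * expR (- 2 * z) + mu.2 ^+ 2 * expR (2 * z).
Proof.
have e1 : expR (- 2 * z) = expR (- z) ^+ 2 by rewrite -expRM_natl mulrN mulNr.
have e2 : expR (2 * z) = expR z ^+ 2 by rewrite -expRM_natl.
have e12 : expR (- z) * expR z = 1 by rewrite -expRD addNr expR0.
rewrite e1 e2 -(real_normK (num_real mu.1)) -(real_normK (num_real mu.2)) normrM.
have := sqr_ge0 (`|mu.1| * expR (- z) - `|mu.2| * expR z); nra.
Qed.

Lemma eigenvalue_gt {R : realType} (mu : R * R) (lam : R) :
  is_eigenvalue mu lam -> 2 * `|mu.1 * mu.2| < lam.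
Proof.
move=> [f [df [fint [fnz feq]]]]; rewrite ltNge; apply/negP => lam_le.
apply: fnz; apply: (square_integrable_solution_eq0 df _ feq fint).
by move=> z; apply: (le_trans lam_le); exact: potential_ge.
Qed.

Lemma solv_actD {R : realType} (x y : R) (m : R * R) :
  solv_act x (solv_act y m) = solv_act (x + y) m.
Proof. by rewrite /solv_act /= opprD !expRD !mulrA. Qed.

Lemma solv_act0 {R : realType} (m : R * R) : solv_act 0 m = m.
Proof. by case: m => m1 m2; rewrite /solv_act /= oppr0 expR0 !mul1r. Qed.

Lemma solv_act_stableN {R : realType} (L : set (R * R)) (a : R) :
  solv_act a @` L = L -> forall m, L m -> L (solv_act (- a) m).
Proof.
by move=> La m; rewrite -{1}La => -[m' Lm' <-]; rewrite solv_actD addNr solv_act0.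
Qed.

Lemma solv_act_stable_mulrn {R : realType} (L : set (R * R)) (t : R) :
  (forall m, L m -> L (solv_act t m)) ->
  forall (n : nat) m, L m -> L (solv_act (n%:R * t) m).
Proof.
move=> Lt; elim=> [|n IH] m Lm; first by rewrite mul0r solv_act0.
by rewrite -addn1 natrD mulrDl mul1r addrC -solv_actD; exact/Lt/IH.
Qed.

Lemma solv_act_stable_normr {R : realType} (L : set (R * R)) (a : R) :
  solv_act a @` L = L ->
  (forall m, L m -> L (solv_act `|a| m)) /\ (forall m, L m -> L (solv_act (- `|a|) m)).
Proof.
move=> La; have Lpos m : L m -> L (solv_act a m) by move=> Lm; rewrite -La; exists m.
have Lneg := solv_act_stableN La.
have [a_ge0|a_lt0] := leP 0 a.
- by rewrite ger0_norm.
- by rewrite ltr0_norm // opprK.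
Qed.

Lemma lattice2_not_in_line {R : realType} (L : set (R * R)) (p : R * R) :
  lattice2 L -> p != (0, 0) -> exists2 m, L m & p.1 * m.1 + p.2 * m.2 != 0.
Proof.
move=> [v [w [det ->]]] p0.
have [pv|pv] := eqVneq (p.1 * v.1 + p.2 * v.2) 0; last first.
  exists v => //; exists 1, 0.
  by rewrite !(mulr1z, mulr0z, mul1r, mul0r, addr0) -surjective_pairing.
have [pw|pw] := eqVneq (p.1 * w.1 + p.2 * w.2) 0; last first.
  exists w => //; exists 0, 1.
  by rewrite !(mulr1z, mulr0z, mul1r, mul0r, add0r) -surjective_pairing.
have det_p1 : (v.1 * w.2 - v.2 * w.1) * p.1 =
    w.2 * (p.1 * v.1 + p.2 * v.2) - v.2 * (p.1 * w.1 + p.2 * w.2) by ring.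
have det_p2 : (v.1 * w.2 - v.2 * w.1) * p.2 =
    v.1 * (p.1 * w.1 + p.2 * w.2) - w.1 * (p.1 * v.1 + p.2 * v.2) by ring.
exfalso; move/eqP: p0; apply; rewrite [p]surjective_pairing.
congr pair; apply: (mulfI det).
- by rewrite det_p1 pv pw !mulr0 subrr.
- by rewrite det_p2 pv pw !mulr0 subrr.
Qed.

Lemma expR_decay_lt {R : realType} (c eps t : R) :
  0 < eps -> 0 < t -> exists n : nat, c * expR (- (n%:R * t)) < eps.
Proof.
move=> eps0 t0; set n := (Num.truncn (c / (eps * t))).+1; exists n.
have cn : c < eps * (n%:R * t).
  by rewrite mulrCA -ltr_pdivrMr ?mulr_gt0 // truncnS_gt.
have ent : n%:R * t <= expR (n%:R * t) by apply: le_trans (expR_ge1Dx _); lra.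
rewrite expRN ltr_pdivrMr ?expR_gt0 //.
by apply: (lt_le_trans cn); rewrite ler_pM2l.
Qed.

Lemma norm_2pi_intr_lt_eq0 {R : realType} (k : int) :
  `|2 * pi * k%:~R : R| < 2 * pi -> k = 0.
Proof.
have pi2 : 0 < 2 * pi :> R by rewrite mulr_gt0 ?pi_gt0.
rewrite normrM (gtr0_norm pi2) -[X in _ < X]mulr1 ltr_pM2l // -intr_norm ltrz1.
by case: k => [[|n]|n].
Qed.

Lemma decay_in_2piZ_eq0 {R : realType} (c t : R) : 0 < t ->
  (forall n : nat, exists k : int, c * expR (- (n%:R * t)) = 2 * pi * k%:~R) ->
  c = 0.
Proof.
move=> t0 c2piZ; have pi2 : 0 < 2 * pi :> R by rewrite mulr_gt0 ?pi_gt0.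
have [n cn] := expR_decay_lt `|c| pi2 t0.
have [k ck] := c2piZ n.
have k0 : k = 0.
  by apply: (@norm_2pi_intr_lt_eq0 R); rewrite -ck normrM (gtr0_norm (expR_gt0 _)).
move: ck; rewrite k0 mulr0 => /eqP.
by rewrite mulf_eq0 (gt_eqF (expR_gt0 _)) orbF => /eqP.
Qed.

Lemma dual_lattice_coord_neq0 {R : realType} (L : set (R * R)) (a : R) (mu : R * R) :
  lattice2 L -> a != 0 -> solv_act a @` L = L ->
  dual_lattice L mu -> mu != (0, 0) -> mu.1 * mu.2 != 0.
Proof.
move=> Ll a0 La dmu mu0; have a_gt0 : 0 < `|a| by rewrite normr_gt0.
have [Lpos Lneg] := solv_act_stable_normr La.
rewrite mulf_eq0 negb_or; apply/andP; split; apply/eqP => mu_eq0.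
- have mu2 : mu.2 != 0.
    by apply: contra_neq mu0 => mu2; rewrite [mu]surjective_pairing mu_eq0 mu2.
  have [|m Lm] := lattice2_not_in_line (p := (0, 1)) Ll.
    by rewrite xpair_eqE oner_eq0 ?andbF.
  rewrite /= mul0r mul1r add0r => m2.
  suff /eqP : mu.2 * m.2 = 0 by rewrite mulf_eq0 (negbTE mu2) (negbTE m2).
  apply: (decay_in_2piZ_eq0 a_gt0) => n.
  have [k mk] := dmu _ (solv_act_stable_mulrn Lpos n Lm).
  by exists k; rewrite -mk /solv_act /= mu_eq0; ring.
- have mu1 : mu.1 != 0.
    by apply: contra_neq mu0 => mu1; rewrite [mu]surjective_pairing mu_eq0 mu1.
  have [|m Lm] := lattice2_not_in_line (p := (1, 0)) Ll.
    by rewrite xpair_eqE oner_eq0 ?andbF.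
  rewrite /= mul0r mul1r addr0 => m1.
  suff /eqP : mu.1 * m.1 = 0 by rewrite mulf_eq0 (negbTE mu1) (negbTE m1).
  apply: (decay_in_2piZ_eq0 a_gt0) => n.
  have [k mk] := dmu _ (solv_act_stable_mulrn Lneg n Lm).
  by exists k; rewrite -mk /solv_act /= mu_eq0 mulrN opprK; ring.
Qed.

Theorem lemma7 (R : realType) (L : set (R * R)) (a : R) :
  lattice2 L -> a != 0 -> solv_act a @` L = L ->
  forall mu : R * R, dual_lattice L mu -> mu != (0, 0) ->
    (forall lam : R, is_eigenvalue mu lam -> 2 * `|mu.1 * mu.2| <= lam) /\
    2 * `|mu.1 * mu.2| != 0.
Proof.
move=> Ll a0 La mu dmu mu0; split.
- by move=> lam /eigenvalue_gt /ltW.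
- by rewrite mulf_neq0 // normr_eq0 (dual_lattice_coord_neq0 Ll a0 La dmu mu0).
Qed.
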